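(* Let $d\ge1$, $k\in\{1,\dots,d\}$, and let $P\subset\{x\in\mathbb{R}^d:x_k>0\}$ be an $n$-dimensional polytope with $0\le n\le d-1$. Suppose there exists a hyperplane $\{x:\pi^\top x=\pi_0\}$ containing $P$ that is not orthogonal to $\bar H=\{x\in\mathbb{R}^d:x_k=0\}$ (i.e. $\pi_k\neq0$). Then: (i) $\mathrm{swp}_k(P)$ is an $(n+1)$-dimensional polytope; (ii) every $l$-face of $\mathrm{swp}_k(P)$ is either an $l$-face of $P$, or an $l$-face of $\mathrm{proj}_k(P)$, or equals $\mathrm{swp}_k(\Gamma^{l-1})$ for some $(l-1)$-face $\Gamma^{l-1}$ of $P$; and (iii) every face of $P$ and every face of $\mathrm{proj}_k(P)$ is a face of $\mathrm{swp}_k(P)$, and $\mathrm{swp}_k(\Gamma)$ is a face of $\mathrm{swp}_k(P)$ for every face $\Gamma$ of $P$.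
   Context: $e_k$ is the $k$-th standard unit vector. For $P\subset\mathbb{R}^d$: $\mathrm{proj}_k(P)=\{p-p_ke_k:p\in P\}$ and $\mathrm{swp}_k(P)=\{p-\theta p_ke_k:p\in P,\theta\in[0,1]\}$. A polytope is the convex hull of finitely many points; its faces are the intersections with supporting hyperplanes (together with the polytope itself), the dimension of a face is that of its affine hull, and an $l$-face is a face of dimension $l$. *)

From HB Require Import structures.
From mathcomp Require Import all_boot all_order all_algebra.
From mathcomp Require Import reals.
Set Implicit Arguments. Unset Strict Implicit. Unset Printing Implicit Defensive.
Import Order.TTheory GRing.Theory Num.Theory.
Local Open Scope ring_scope.

Section Defs.
Variables (R : realType) (d : nat).
Notation vec := 'rV[R]_d.

Definition rset := vec -> Prop.

Definition dotv (a x : vec) : R := \sum_(i < d) a 0 i * x 0 i.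

Definition unitv (k : 'I_d) : vec := delta_mx 0 k.

Definition conv_hull (S : seq vec) : rset := fun x =>
  exists lam : 'I_(size S) -> R,
    (forall i, 0 <= lam i) /\ \sum_i lam i = 1 /\
    x = \sum_i lam i *: S`_i.

Definition is_polytope (P : rset) : Prop :=
  exists S : seq vec, P = conv_hull S.

Definition aff_hull (A : rset) : rset := fun x =>
  exists S : seq vec, (forall i, (i < size S)%N -> A S`_i) /\
    exists lam : 'I_(size S) -> R, \sum_i lam i = 1 /\
      x = \sum_i lam i *: S`_i.

(* A has dimension n: its affine hull is a translate x0 + V of a linear
   subspace V (row space of a matrix) with dim V = n.  The empty set has
   no (natural-number) dimension. *)
Definition affdim (A : rset) (n : nat) : Prop :=
  exists (x0 : vec) (V : 'M[R]_d), \rank V = n /\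
    forall x, aff_hull A x <-> (x - x0 <= V)%MS.

Definition is_face (P F : rset) : Prop :=
  F = P \/
  exists (a : vec) (b : R), a != 0 /\
    (forall x, P x -> dotv a x <= b) /\
    (exists x, P x /\ dotv a x = b) /\
    F = (fun x => P x /\ dotv a x = b).

Definition is_lface (P : rset) (l : nat) (F : rset) : Prop :=
  is_face P F /\ affdim F l.

Definition projk (k : 'I_d) (P : rset) : rset := fun y =>
  exists p, P p /\ y = p - p 0 k *: unitv k.

Definition swpk (k : 'I_d) (P : rset) : rset := fun y =>
  exists p theta, P p /\ 0 <= theta <= 1 /\ y = p - (theta * p 0 k) *: unitv k.

End Defs.

(* Write the points of swp_k(P) as p - t p_k e_k with p in P and t in [0, 1].
   Along such a segment a linear functional a changes by -t p_k a_k, and p_k > 0;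
   so on swp_k(P) the maximum of a is attained only at t = 0 if a_k > 0, only
   at t = 1 if a_k < 0, and independently of t if a_k = 0.  Hence every exposed
   face of swp_k(P) is a face of P, a face of proj_k(P), or the sweep of a face
   of P.  Conversely, since pi is constant on P and e_k is constant (zero) on
   proj_k(P), the normal of a face of P or of proj_k(P) can be tilted by a
   multiple of pi, resp. e_k, to give its k-th coordinate any prescribed
   sign.  For the dimensions, the affine hull of swp_k(P) is aff(P) + R e_k,
   and e_k is not parallel to aff(P) because pi_k <> 0. *)

From HB Require Import structures.
From mathcomp Require Import all_boot all_order all_algebra.
From mathcomp Require Import reals boolp.
From mathcomp Require Import ring lra.
Import Order.TTheory GRing.Theory Num.Theory.
Local Open Scope ring_scope.
Set Implicit Arguments. Unset Strict Implicit. Unset Printing Implicit Defensive.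

Section DotProduct.
Variables (R : realType) (d : nat).
Implicit Types (a x y : 'rV[R]_d) (k : 'I_d).

Lemma dotvC a x : dotv a x = dotv x a.
Proof. by apply: eq_bigr => i _; rewrite mulrC. Qed.

Fact dotv_is_linear a : linear_for *%R (dotv a).
Proof.
move=> c x y; rewrite /dotv mulr_sumr -big_split.
by apply: eq_bigr => i _; rewrite !mxE mulrDr mulrCA.
Qed.

HB.instance Definition _ a :=
  GRing.isLinear.Build R 'rV[R]_d R *%R (dotv a) (dotv_is_linear a).

Lemma dotvDr a x y : dotv a (x + y) = dotv a x + dotv a y.
Proof. exact: raddfD. Qed.

Lemma dotvBr a x y : dotv a (x - y) = dotv a x - dotv a y.
Proof. exact: raddfB. Qed.

Lemma dotvZr a c x : dotv a (c *: x) = c * dotv a x.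
Proof. exact: linearZ_LR. Qed.

Lemma dotvDl a y x : dotv (a + y) x = dotv a x + dotv y x.
Proof. by rewrite !(dotvC _ x) dotvDr. Qed.

Lemma dotvZl a c x : dotv (c *: a) x = c * dotv a x.
Proof. by rewrite !(dotvC _ x) dotvZr. Qed.

Lemma dotv0l x : dotv 0 x = 0.
Proof. by rewrite dotvC; exact: raddf0. Qed.

Lemma dotv_unitr a k : dotv a (unitv R k) = a 0 k.
Proof.
rewrite /dotv (bigD1 k) //= big1 => [|i /negbTE ik]; rewrite !mxE ?ik ?eqxx.
  by rewrite mulr1 addr0.
by rewrite mulr0.
Qed.

Lemma dotv_unitl a k : dotv (unitv R k) a = a 0 k.
Proof. by rewrite dotvC dotv_unitr. Qed.

Lemma sub_kermx_dotv a x : (x <= kermx a^T)%MS = (dotv a x == 0).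
Proof.
have xaE : x *m a^T = (dotv a x)%:M.
  by apply/rowP => i; rewrite ord1 !mxE eqxx; apply: eq_bigr => j _; rewrite mxE mulrC.
by rewrite sub_kermx xaE -scalemx1 scalemx_eq0 oner_eq0 orbF.
Qed.

End DotProduct.

Definition catn T n (f g : nat -> T) i := if (i < n)%N then f i else g (i - n)%N.

Lemma big_catn (V : nmodType) n m (f g : nat -> V) :
  \sum_(i < n + m) catn n f g i = \sum_(i < n) f i + \sum_(i < m) g i.
Proof.
rewrite big_split_ord /=; congr (_ + _); apply: eq_bigr => i _.
  by rewrite /catn ltn_ord.
by rewrite /catn ltnNge leq_addr addKn.
Qed.

Lemma catnZ (R : pzRingType) (V : lmodType R) n (lam mu : nat -> R) (p q : nat -> V) i :
  catn n lam mu i *: catn n p q i = catn n (fun j => lam j *: p j) (fun j => mu j *: q j) i.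
Proof. by rewrite /catn; case: ifP. Qed.

Section AffineHull.
Variables (R : realType) (d : nat).
Implicit Types (A B C : rset R d) (x y z u w : 'rV[R]_d).

(* Unlike affine combinations (wt = 1), these are closed under sums and scaling. *)
Definition combination A (wt : R) x := exists n (p : nat -> 'rV[R]_d) (lam : nat -> R),
  [/\ forall i, (i < n)%N -> A (p i), \sum_(i < n) lam i = wt &
      x = \sum_(i < n) lam i *: p i].

Lemma aff_hullP A x : aff_hull A x <-> combination A 1 x.
Proof.
split=> [[S [SA [lam [lam1 ->]]]] | [n [p [lam [pA lam1 ->]]]]].
- exists (size S), (nth 0 S), (fun i => if insub i is Some j then lam j else 0).
  by split=> //; [rewrite -lam1 |]; apply: eq_bigr => i _; rewrite valK.
- exists (mkseq p n); rewrite size_mkseq; split=> [i lt_in|].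
    by rewrite nth_mkseq //; apply: pA.
  by exists (fun i => lam i); split=> //; apply: eq_bigr => i _; rewrite nth_mkseq.
Qed.

Lemma combinationD A wt1 wt2 x y :
  combination A wt1 x -> combination A wt2 y -> combination A (wt1 + wt2) (x + y).
Proof.
move=> [n [p [lam [pA <- ->]]]] [m [q [mu [qA <- ->]]]].
exists (n + m)%N, (catn n p q), (catn n lam mu); split; last 2 first.
- exact: big_catn.
- by under [RHS]eq_bigr do rewrite catnZ; rewrite big_catn.
move=> i lt_inm; rewrite /catn; case: ltnP => [/pA // | le_ni].
by apply: qA; rewrite ltn_subLR.
Qed.

Lemma combinationZ A wt c x : combination A wt x -> combination A (c * wt) (c *: x).
Proof.
move=> [n [p [lam [pA <- ->]]]]; exists n, p, (fun i => c * lam i).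
by rewrite mulr_sumr scaler_sumr; split=> //; apply: eq_bigr => i _; rewrite scalerA.
Qed.

Lemma aff_hull_sub A x : A x -> aff_hull A x.
Proof.
move=> Ax; apply/aff_hullP; exists 1%N, (fun=> x), (fun=> 1).
by rewrite !big_ord1 scale1r; split=> // -[].
Qed.

Lemma aff_hull_affine A z u w c :
  aff_hull A z -> aff_hull A u -> aff_hull A w -> aff_hull A (z + c *: (u - w)).
Proof.
move=> /aff_hullP Az /aff_hullP Au /aff_hullP Aw; apply/aff_hullP.
have -> : 1 = 1 + (c * 1 + (- c) * 1) :> R by rewrite mulNr subrr addr0.
rewrite scalerBr -scaleNr; apply: combinationD Az _.
by apply: combinationD; apply: combinationZ.
Qed.

Lemma aff_hull_min A C x : (forall y, A y -> C y) ->
    (forall z u w c, C z -> C u -> C w -> C (z + c *: (u - w))) ->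
  aff_hull A x -> C x.
Proof.
move=> AC Caff /aff_hullP [[|n] [p [lam [pA lam1 ->]]]].
  by move: lam1; rewrite big_ord0 => /eqP; rewrite eq_sym oner_eq0.
have Cp0 := AC _ (pA 0%N isT).
suff Cpre j : (j <= n.+1)%N -> C (p 0%N + \sum_(i < j) lam i *: (p i - p 0%N)).
  move: (Cpre _ (leqnn _)); congr C.
  under eq_bigr do rewrite scalerBr.
  by rewrite sumrB -scaler_suml lam1 scale1r addrC subrK.
elim: j => [_|j IHj lt_jn]; first by rewrite big_ord0 addr0.
rewrite big_ord_recr /= addrA; apply: Caff => //; first exact: IHj (ltnW lt_jn).
exact/AC/pA.
Qed.

Lemma aff_hull_mono A B x : (forall y, A y -> B y) -> aff_hull A x -> aff_hull B x.
Proof.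
move=> AB; apply: (aff_hull_min (C := aff_hull B)) => [y /AB | *].
  exact: aff_hull_sub.
exact: aff_hull_affine.
Qed.

Lemma aff_hull_hyperplane A a b x :
  (forall y, A y -> dotv a y = b) -> aff_hull A x -> dotv a x = b.
Proof.
move=> Ab; apply: (aff_hull_min (C := fun x => dotv a x = b)) => // z u w c az au aw.
by rewrite dotvDr dotvZr dotvBr az au aw subrr mulr0 addr0.
Qed.

Lemma aff_hull_nonempty A x : aff_hull A x -> exists y, A y.
Proof. by apply: (aff_hull_min (C := fun=> exists y, A y)) => [y Ay | //]; exists y. Qed.

Lemma affdim_nonempty A n : affdim A n -> exists x, A x.
Proof.
move=> [x0 [V [_ affA]]]; apply: (@aff_hull_nonempty _ x0).
by apply/affA; rewrite subrr sub0mx.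
Qed.

Lemma aff_hull_rebase A x0 x1 (V : 'M[R]_d) :
  (forall x, aff_hull A x <-> (x - x0 <= V)%MS) -> aff_hull A x1 ->
  forall x, aff_hull A x <-> (x - x1 <= V)%MS.
Proof.
move=> affA /affA x10V x; rewrite affA.
have -> : x - x0 = (x - x1) + (x1 - x0) by rewrite addrA subrK.
split=> [xV | xV]; last exact: addmx_sub.
by rewrite -(addrK (x1 - x0) (x - x1)) addmx_sub ?eqmx_opp.
Qed.

End AffineHull.

Section ConvexHull.
Variables (R : realType) (d : nat).
Implicit Types (S T : seq 'rV[R]_d) (x y : 'rV[R]_d).

Lemma convP S x : conv_hull S x <-> exists lam : nat -> R,
  [/\ forall i, (i < size S)%N -> 0 <= lam i, \sum_(i < size S) lam i = 1 &
      x = \sum_(i < size S) lam i *: S`_i].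
Proof.
split=> [[lam [lam0 [lam1 ->]]] | [lam [lam0 lam1 ->]]].
- exists (fun i => if insub i is Some j then lam j else 0).
  split=> [i lt_iS | |]; first by rewrite insubT.
  by rewrite -lam1; apply: eq_bigr => i _; rewrite valK.
  by apply: eq_bigr => i _; rewrite valK.
- by exists (fun i => lam i); split=> // i; apply: lam0.
Qed.

Lemma conv_hull_mem S i : (i < size S)%N -> conv_hull S S`_i.
Proof.
move=> lt_iS; apply/convP; exists (fun j => (j == i)%:R); split=> [j _ | |].
- exact: ler0n.
- rewrite (bigD1 (Ordinal lt_iS)) //= eqxx big1 ?addr0 // => j.
  by rewrite -val_eqE /= => /negbTE ->.
- rewrite (bigD1 (Ordinal lt_iS)) //= eqxx scale1r big1 ?addr0 // => j.
  by rewrite -val_eqE /= => /negbTE ->; rewrite scale0r.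
Qed.

Lemma conv_hull_cat S T x y t : conv_hull S x -> conv_hull T y -> 0 <= t <= 1 ->
  conv_hull (S ++ T) ((1 - t) *: x + t *: y).
Proof.
move=> /convP [lam [lam0 lam1 ->]] /convP [mu [mu0 mu1 ->]] /andP [t0 t1].
apply/convP; exists (catn (size S) (fun i => (1 - t) * lam i) (fun i => t * mu i)).
have nthE i : (S ++ T)`_i = catn (size S) (nth 0 S) (nth 0 T) i by rewrite nth_cat.
rewrite size_cat; split.
- move=> i lt_i; rewrite /catn; case: ltnP => [/lam0 | le_Si].
    by apply: mulr_ge0; rewrite ?subr_ge0.
  by apply/mulr_ge0/mu0; rewrite // -(ltn_add2l (size S)) subnKC.
- by rewrite big_catn -!mulr_sumr lam1 mu1 !mulr1 subrK.
- under [RHS]eq_bigr do rewrite nthE catnZ; rewrite big_catn !scaler_sumr.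
  by congr (_ + _); apply: eq_bigr => i _; rewrite scalerA.
Qed.

Lemma conv_hull_map (f : {linear 'rV[R]_d -> 'rV[R]_d}) S x :
  conv_hull S x -> conv_hull (map f S) (f x).
Proof.
move=> /convP [lam [lam0 lam1 ->]]; apply/convP; exists lam; rewrite size_map.
split=> //; rewrite linear_sum; apply: eq_bigr => i _.
by rewrite linearZ (nth_map 0).
Qed.

End ConvexHull.

Section SweepPoints.
Variables (R : realType) (d : nat) (k : 'I_d).
Implicit Types (P : rset R d) (a p x y : 'rV[R]_d) (S : seq 'rV[R]_d).

Definition projv x : 'rV[R]_d := x - x 0 k *: unitv R k.

Fact projv_is_linear : linear projv.
Proof. by move=> c x y; apply/rowP => j; rewrite !mxE; ring. Qed.

HB.instance Definition _ :=
  GRing.isLinear.Build R 'rV[R]_d 'rV[R]_d *:%R projv projv_is_linear.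

Lemma swpk_sub P x : P x -> swpk k P x.
Proof. by move=> Px; exists x, 0; rewrite lexx ler01 mul0r scale0r subr0. Qed.

Lemma swpk_projv P x : P x -> swpk k P (projv x).
Proof. by move=> Px; exists x, 1; rewrite lexx ler01 mul1r. Qed.

Lemma projk_sub_swpk P y : projk k P y -> swpk k P y.
Proof. by case=> p [Pp ->]; apply: swpk_projv. Qed.

Lemma swpk_shift P p c : P p -> 0 < p 0 k -> 0 <= c <= p 0 k ->
  swpk k P (p - c *: unitv R k).
Proof.
move=> Pp pk /andP [c0 cp]; exists p, (c / p 0 k); rewrite mulfVK ?gt_eqF //.
by rewrite divr_ge0 ?ler_pdivrMr ?mul1r ?(ltW pk).
Qed.

Lemma swpk_pointE p t : p - (t * p 0 k) *: unitv R k = (1 - t) *: p + t *: projv p.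
Proof. by apply/rowP => j; rewrite !mxE; ring. Qed.

Lemma dotv_swpk a p t :
  dotv a (p - (t * p 0 k) *: unitv R k) = dotv a p - t * p 0 k * a 0 k.
Proof. by rewrite dotvBr dotvZr dotv_unitr. Qed.

Lemma dotv_projv a x : dotv a (projv x) = dotv a x - x 0 k * a 0 k.
Proof. by rewrite dotvBr dotvZr dotv_unitr. Qed.

Lemma swpk_conv_hull S : (forall x, conv_hull S x -> 0 < x 0 k) ->
  swpk k (conv_hull S) = conv_hull (S ++ map projv S).
Proof.
move=> S_pos; rewrite predeqE => y; split.
  case=> p [t [Sp [t01 ->]]]; rewrite swpk_pointE.
  exact: conv_hull_cat (conv_hull_map _ Sp) t01.
move=> /convP [mu []]; rewrite size_cat size_map; set m := size S => mu0.
rewrite !big_split_ord /= => mu1 ->.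
under eq_bigr do rewrite nth_cat ltn_ord.
under [X in _ + X]eq_bigr => i _ do
  rewrite nth_cat ltnNge leq_addr addKn /= (nth_map 0 _ _ (ltn_ord i)).
have Sk_pos i : (i < m)%N -> 0 < S`_i 0 k by move/conv_hull_mem/S_pos.
pose p := \sum_(i < m) (mu i + mu (m + i)%N) *: S`_i.
pose c := \sum_(i < m) mu (m + i)%N * S`_i 0 k.
have Sp : conv_hull S p.
  apply/convP; exists (fun i => mu i + mu (m + i)%N); split=> //.
    by move=> i lt_im; rewrite addr_ge0 ?mu0 ?ltn_add2l // ltn_addr.
  by rewrite big_split; exact: mu1.
have -> : \sum_(i < m) mu i *: S`_i + \sum_(i < m) mu (m + i)%N *: projv S`_i =
          p - c *: unitv R k.
  apply/rowP => j; rewrite !(mxE, summxE) mulr_suml -sumrB -big_split /=.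
  by apply: eq_bigr => i _; rewrite !mxE; ring.
apply: swpk_shift => //; first exact: S_pos.
apply/andP; split.
  apply: sumr_ge0 => i _; apply: mulr_ge0; first by rewrite mu0 ?ltn_add2l.
  exact/ltW/Sk_pos.
rewrite summxE; apply: ler_sum => i _.
rewrite mxE; apply: ler_wpM2r; first exact/ltW/Sk_pos.
by rewrite lerDr mu0 // ltn_addr.
Qed.

End SweepPoints.

Section Rank.
Variable F : fieldType.

Lemma mxrank_adds_row m n (V : 'M[F]_(m, n)) (e : 'rV[F]_n) :
  ~~ (e <= V)%MS -> \rank (V + e)%MS = (\rank V).+1.
Proof.
move=> eV; have e_neq0 : e != 0 by apply: contraNneq eV => ->; rewrite sub0mx.
have cap_lt : (\rank (V :&: e)%MS < \rank e)%N.
  rewrite (ltn_leqif (mxrank_leqif_eq (capmxSr V e))).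
  by apply: contra eV => /andP [_ /submx_trans]; apply; apply: capmxSl.
move: cap_lt (mxrank_sum_cap V e); rewrite rank_rV e_neq0 ltnS leqn0 => /eqP ->.
by rewrite addn0 addn1.
Qed.

Lemma mxrank_cap_codim1 m1 m2 n (V : 'M[F]_(m1, n)) (K : 'M[F]_(m2, n)) (e : 'rV[F]_n) :
  (e <= V)%MS -> ~~ (e <= K)%MS -> row_full (K + e)%MS ->
  \rank V = (\rank (V :&: K)%MS).+1.
Proof.
move=> eV eK Kfull; have -> : \rank V = \rank (e + (K :&: V))%MS.
  by rewrite (matrix_modl K eV) capTmx // addsmxC.
by rewrite addsmxC capmxC mxrank_adds_row // sub_capmx negb_and eK orbT.
Qed.

End Rank.

Section SweepAffineHull.
Variables (R : realType) (d : nat) (k : 'I_d) (G : rset R d) (p : 'rV[R]_d).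
Hypotheses (Gp : G p) (pk : p 0 k != 0).

Lemma aff_hull_swpk x :
  aff_hull (swpk k G) x <-> exists z c, aff_hull G z /\ x = z + c *: unitv R k.
Proof.
split=> [|[z [c [Gz ->]]]].
  apply: (aff_hull_min (C := fun x => exists z c, aff_hull G z /\ x = z + c *: unitv R k)).
    move=> _ [q [t [Gq [_ ->]]]]; exists q, (- (t * q 0 k)).
    by rewrite scaleNr; split; first exact: aff_hull_sub.
  move=> _ _ _ c [z1 [c1 [Gz1 ->]]] [z2 [c2 [Gz2 ->]]] [z3 [c3 [Gz3 ->]]].
  exists (z1 + c *: (z2 - z3)), (c1 + c * (c2 - c3)); split; first exact: aff_hull_affine.
  by apply/rowP => j; rewrite !mxE; ring.
have -> : c *: unitv R k = (c / p 0 k) *: (p - projv k p).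
  by rewrite /projv opprB addrC subrK scalerA mulfVK.
apply: aff_hull_affine; last by apply/aff_hull_sub/swpk_projv.
  exact: aff_hull_mono (@swpk_sub _ _ k G) Gz.
exact/aff_hull_sub/swpk_sub.
Qed.

Variables (pi : 'rV[R]_d) (pi0 : R).
Hypotheses (G_hyper : forall x, G x -> dotv pi x = pi0) (pik : pi 0 k != 0).

Lemma aff_hull_shift_hyper z c :
  aff_hull G z -> dotv pi (z + c *: unitv R k) = pi0 -> c = 0.
Proof.
move=> Gz; rewrite dotvDr dotvZr dotv_unitr (aff_hull_hyperplane G_hyper Gz).
by rewrite -[RHS]addr0 => /addrI /eqP; rewrite mulf_eq0 (negbTE pik) orbF => /eqP.
Qed.

Lemma affdim_swpk n : affdim G n -> affdim (swpk k G) n.+1.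
Proof.
move=> [x0 [V [rV affG]]].
have x0G : aff_hull G x0 by apply/affG; rewrite subrr sub0mx.
have eV : ~~ (unitv R k <= V)%MS.
  apply/negP => eV; have /(aff_hull_hyperplane G_hyper) : aff_hull G (x0 + 1 *: unitv R k).
    by apply/affG; rewrite scale1r addrAC subrr add0r.
  by move/(aff_hull_shift_hyper x0G)/eqP; rewrite oner_eq0.
exists x0, (V + unitv R k)%MS; split; first by rewrite mxrank_adds_row ?rV.
move=> x; rewrite aff_hull_swpk; split.
- case=> z [c [Gz ->]]; rewrite addrAC; apply: addmx_sub_adds; first exact/affG.
  exact/scalemx_sub/submx_refl.
- case/sub_addsmxP => -[u v] /= xE.
  exists (x0 + u *m V), (v 0 0); split.
    by apply/affG; rewrite addrAC subrr add0r submxMl.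
  have -> : v 0 0 *: unitv R k = v *m unitv R k by rewrite {2}[v]mx11_scalar mul_scalar_mx.
  by rewrite -addrA -xE addrC subrK.
Qed.

Lemma affdim_swpk_inv l : affdim (swpk k G) l -> (0 < l)%N /\ affdim G l.-1.
Proof.
move=> [x0 [V [rV affS]]].
have affSp := aff_hull_rebase affS (aff_hull_sub (swpk_sub k Gp)).
set e := unitv R k; set K := kermx pi^T.
have eV : (e <= V)%MS.
  have /affSp : aff_hull (swpk k G) (p + 1 *: e).
    by apply/aff_hull_swpk; exists p, 1; split; first exact: aff_hull_sub.
  by rewrite scale1r addrAC subrr add0r.
have eK : ~~ (e <= K)%MS by rewrite sub_kermx_dotv dotv_unitr.
have Kfull : row_full (K + e)%MS.
  have pi_neq0 : pi != 0 by apply: contraNneq pik => ->; rewrite mxE.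
  have d_gt0 : (0 < d)%N := leq_ltn_trans (leq0n k) (ltn_ord k).
  by rewrite /row_full mxrank_adds_row // mxrank_ker mxrank_tr rank_rV pi_neq0 subn1 prednK.
have rankV := mxrank_cap_codim1 eV eK Kfull.
split; first by rewrite -rV rankV.
exists p, (V :&: K)%MS; split; first by rewrite -rV rankV.
move=> x; rewrite sub_capmx sub_kermx_dotv dotvBr (G_hyper Gp) subr_eq0; split=> [Gx | ].
  apply/andP; split; last exact/eqP/(aff_hull_hyperplane G_hyper).
  by apply/affSp/aff_hull_swpk; exists x, 0; rewrite scale0r addr0.
case/andP => /affSp /aff_hull_swpk [z [c [Gz ->]]] /eqP /(aff_hull_shift_hyper Gz) ->.
by rewrite scale0r addr0.
Qed.

End SweepAffineHull.

Section Faces.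
Variables (R : realType) (d : nat).
Implicit Types (Q F : rset R d) (a x y : 'rV[R]_d) (b : R).

Definition supporting Q a b :=
  (forall x, Q x -> dotv a x <= b) /\ exists x, Q x /\ dotv a x = b.

Definition exposed Q a b : rset R d := fun x => Q x /\ dotv a x = b.

Lemma is_face_exposed Q a b : supporting Q a b -> is_face Q (exposed Q a b).
Proof.
move=> [Qab [x [Qx abx]]]; have [a0 | a_neq0] := eqVneq a 0; last first.
  by right; exists a, b; split; [|split; [|split; [exists x|]]].
left; rewrite predeqE => y; move: abx; rewrite /exposed a0 !dotv0l => <-.
by split=> [[]|].
Qed.

Lemma is_faceP Q F : (exists x, Q x) -> is_face Q F ->
  exists a b, supporting Q a b /\ F = exposed Q a b.
Proof.
move=> [x Qx] [-> | [a [b [_ [Qab [Qx_ab ->]]]]]]; last by exists a, b.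
exists 0, 0; split; first by split=> [y _|]; [rewrite dotv0l | exists x; rewrite dotv0l].
by rewrite predeqE => y; rewrite /exposed dotv0l; split=> [|[]].
Qed.

Lemma supporting_tilt (k : 'I_d) Q pi pi0 a b s :
    (forall x, Q x -> dotv pi x = pi0) -> pi 0 k != 0 -> supporting Q a b ->
  exists a' b', [/\ supporting Q a' b', exposed Q a' b' = exposed Q a b & a' 0 k = s].
Proof.
move=> Q_hyper pik [Qab [x [Qx abx]]]; pose c := (s - a 0 k) / pi 0 k.
have tiltE y : Q y -> dotv (a + c *: pi) y = dotv a y + c * pi0.
  by move=> Qy; rewrite dotvDl dotvZl Q_hyper.
exists (a + c *: pi), (b + c * pi0); split.
- split=> [y Qy|]; first by rewrite tiltE // lerD2r Qab.
  by exists x; rewrite tiltE // abx.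
- rewrite predeqE => y; split=> -[Qy aby]; split=> //.
    by apply: (addIr (c * pi0)); rewrite -tiltE.
  by rewrite tiltE // aby.
- by rewrite !mxE mulfVK // addrC subrK.
Qed.

End Faces.

Section SweepFaces.
Variables (R : realType) (d : nat) (k : 'I_d) (P : rset R d).
Hypothesis P_pos : forall x, P x -> 0 < x 0 k.
Implicit Types (a : 'rV[R]_d) (b : R).

Lemma exposed_swpk_gt0 a b : 0 < a 0 k -> (forall x, P x -> dotv a x <= b) ->
  exposed (swpk k P) a b = exposed P a b.
Proof.
move=> ak Pab; rewrite predeqE => y; split=> -[Sy aby]; split=> //; last exact: swpk_sub.
move: Sy aby => [p [t [Pp [/andP [t0 _] ->]]]]; rewrite dotv_swpk => abp.
have -> : t = 0.
  by have := Pab _ Pp; have := mulr_gt0 (P_pos Pp) ak; nra.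
by rewrite mul0r scale0r subr0.
Qed.

Lemma supporting_swpk_gt0 a b : 0 < a 0 k ->
  supporting (swpk k P) a b <-> supporting P a b.
Proof.
move=> ak; split=> [[Sab [y Sy_ab]] | [Pab [x [Px abx]]]].
  have Pab x : P x -> dotv a x <= b by move/(swpk_sub k); apply: Sab.
  have : exposed P a b y by rewrite -(exposed_swpk_gt0 ak Pab).
  by split=> //; exists y.
split; last by exists x; split; first exact: swpk_sub.
move=> _ [p [t [Pp [/andP [t0 _] ->]]]]; rewrite dotv_swpk.
have := Pab _ Pp; have := mulr_gt0 (P_pos Pp) ak; nra.
Qed.

Lemma exposed_swpk_lt0 a b : a 0 k < 0 -> (forall y, projk k P y -> dotv a y <= b) ->
  exposed (swpk k P) a b = exposed (projk k P) a b.
Proof.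
move=> ak Pab; rewrite predeqE => y; split=> -[Sy aby]; split=> //; last exact: projk_sub_swpk.
move: Sy aby => [p [t [Pp [/andP [_ t1] ->]]]]; rewrite dotv_swpk => abp.
have := Pab _ (ex_intro _ p (conj Pp erefl)); rewrite dotv_projv => abp_le.
have pa : 0 < p 0 k * - a 0 k by rewrite mulr_gt0 ?oppr_gt0 ?P_pos.
have -> : t = 1 by nra.
by exists p; rewrite mul1r.
Qed.

Lemma supporting_swpk_lt0 a b : a 0 k < 0 ->
  supporting (swpk k P) a b <-> supporting (projk k P) a b.
Proof.
move=> ak; split=> [[Sab [y Sy_ab]] | [Pab [x [Px abx]]]].
  have Pab x : projk k P x -> dotv a x <= b by move/projk_sub_swpk; apply: Sab.
  have : exposed (projk k P) a b y by rewrite -(exposed_swpk_lt0 ak Pab).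
  by split=> //; exists y.
split; last by exists x; split; first exact: projk_sub_swpk.
move=> _ [p [t [Pp [/andP [_ t1] ->]]]]; rewrite dotv_swpk.
have := Pab _ (ex_intro _ p (conj Pp erefl)); rewrite dotv_projv.
have : 0 < p 0 k * - a 0 k by rewrite mulr_gt0 ?oppr_gt0 ?P_pos.
nra.
Qed.

Lemma exposed_swpk_eq0 a b : a 0 k = 0 -> exposed (swpk k P) a b = swpk k (exposed P a b).
Proof.
move=> ak; rewrite predeqE => y; split.
  by case=> -[p [t [Pp [t01 ->]]]]; rewrite dotv_swpk ak mulr0 subr0 => abp; exists p, t.
case=> p [t [[Pp abp] [t01 ->]]]; split; first by exists p, t.
by rewrite dotv_swpk ak mulr0 subr0.
Qed.

Lemma supporting_swpk_eq0 a b : a 0 k = 0 -> supporting (swpk k P) a b <-> supporting P a b.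
Proof.
move=> ak; split=> [[Sab [y Sy_ab]] | [Pab [x [Px abx]]]].
  split=> [x /(swpk_sub k) /Sab // |].
  have : swpk k (exposed P a b) y by rewrite -exposed_swpk_eq0.
  by case=> p [_ [Pp_ab _]]; exists p.
split=> [_ [p [t [Pp [_ ->]]]] | ]; first by rewrite dotv_swpk ak mulr0 subr0 Pab.
by exists x; split; first exact: swpk_sub.
Qed.

Variables (pi p0 : 'rV[R]_d) (pi0 : R).
Hypotheses (P_hyper : forall x, P x -> dotv pi x = pi0) (pik : pi 0 k != 0) (Pp0 : P p0).

Lemma is_face_swpk F : is_face P F -> is_face (swpk k P) F.
Proof.
case/(is_faceP (ex_intro _ p0 Pp0)) => a [b [Pab ->]].
have [a' [b' [Pab' <- a'k]]] := supporting_tilt 1 P_hyper pik Pab.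
have a'k_gt0 : 0 < a' 0 k by rewrite a'k ltr01.
rewrite -(exposed_swpk_gt0 a'k_gt0 Pab'.1).
exact/is_face_exposed/(supporting_swpk_gt0 _ a'k_gt0).2.
Qed.

Lemma is_face_swpk_projk F : is_face (projk k P) F -> is_face (swpk k P) F.
Proof.
have Pp0' : exists y, projk k P y by exists (projv k p0), p0.
case/(is_faceP Pp0') => a [b [Pab ->]].
have projk_hyper y : projk k P y -> dotv (unitv R k) y = 0.
  by case=> p [_ ->]; rewrite dotv_unitl !mxE !eqxx mulr1 subrr.
have ek : unitv R k 0 k != 0 by rewrite mxE !eqxx oner_eq0.
have [a' [b' [Pab' <- a'k]]] := supporting_tilt (-1) projk_hyper ek Pab.
have a'k_lt0 : a' 0 k < 0 by rewrite a'k oppr_lt0 ltr01.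
rewrite -(exposed_swpk_lt0 a'k_lt0 Pab'.1).
exact/is_face_exposed/(supporting_swpk_lt0 _ a'k_lt0).2.
Qed.

Lemma is_face_swpk_swpk G : is_face P G -> is_face (swpk k P) (swpk k G).
Proof.
case/(is_faceP (ex_intro _ p0 Pp0)) => a [b [Pab ->]].
have [a' [b' [Pab' <- a'k]]] := supporting_tilt 0 P_hyper pik Pab.
by rewrite -exposed_swpk_eq0 //; apply/is_face_exposed/(supporting_swpk_eq0 _ a'k).2.
Qed.

Lemma is_lface_swpk l F : is_lface (swpk k P) l F ->
  is_lface P l F \/ is_lface (projk k P) l F \/
  exists G, (0 < l)%N /\ is_lface P l.-1 G /\ F = swpk k G.
Proof.
case=> /(is_faceP (ex_intro _ p0 (swpk_sub k Pp0))) [a [b [Sab ->]]] dimF.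
case: (ltgtP (a 0 k) 0) => ak.
- have Pab := (supporting_swpk_lt0 _ ak).1 Sab.
  rewrite (exposed_swpk_lt0 ak Pab.1) in dimF *.
  by right; left; split=> //; apply: is_face_exposed.
- have Pab := (supporting_swpk_gt0 _ ak).1 Sab.
  rewrite (exposed_swpk_gt0 ak Pab.1) in dimF *.
  by left; split=> //; apply: is_face_exposed.
- have Pab := (supporting_swpk_eq0 _ ak).1 Sab; have [_ [q [Pq abq]]] := Pab.
  rewrite exposed_swpk_eq0 // in dimF *; right; right; exists (exposed P a b).
  have [l_gt0 dimG] := affdim_swpk_inv (G := exposed P a b) (conj Pq abq)
    (lt0r_neq0 (P_pos Pq)) (fun x Gx => P_hyper Gx.1) pik dimF.
  by split=> //; split=> //; split; first exact: is_face_exposed.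
Qed.

End SweepFaces.


Theorem proposition5 (R : realType) (d : nat) (k : 'I_d) (P : rset R d)
    (n : nat) (pi : 'rV[R]_d) (pi0 : R) :
  (1 <= d)%N ->
  is_polytope P -> affdim P n -> (n <= d.-1)%N ->
  (forall x, P x -> 0 < x 0 k) ->
  (forall x, P x -> dotv pi x = pi0) -> pi 0 k != 0 ->
  (* (i) *)
  (is_polytope (swpk k P) /\ affdim (swpk k P) n.+1) /\
  (* (ii) *)
  (forall (l : nat) (F : rset R d), is_lface (swpk k P) l F ->
     is_lface P l F \/ is_lface (projk k P) l F \/
     exists G : rset R d, (0 < l)%N /\ is_lface P l.-1 G /\ F = swpk k G) /\
  (* (iii) *)
  ((forall F, is_face P F -> is_face (swpk k P) F) /\
   (forall F, is_face (projk k P) F -> is_face (swpk k P) F) /\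
   (forall G, is_face P G -> is_face (swpk k P) (swpk k G))).
Proof.
(* d >= 1 already follows from k : 'I_d, and n <= d - 1 from the hyperplane. *)
move=> _ [S ->] dimP _ P_pos P_hyper pik.
have [p0 Pp0] := affdim_nonempty dimP.
split; [split | split; [|split; [|split]]].
- by exists (S ++ map (projv k) S); apply: swpk_conv_hull.
- exact: (affdim_swpk Pp0 (lt0r_neq0 (P_pos _ Pp0)) P_hyper pik dimP).
- exact: (is_lface_swpk P_pos P_hyper pik Pp0).
- exact: (is_face_swpk P_pos P_hyper pik Pp0).
- exact: (is_face_swpk_projk P_pos Pp0).
- exact: (is_face_swpk_swpk P_hyper pik Pp0).
Qed.
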